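(* Let $E$ be a real symmetric $(n+m)\times(n+m)$ matrix. The following are equivalent: (a) $E\in\mathcal{E}_{n+m}$, i.e. there exist real unit vectors $a_1,\ldots,a_n,b_1,\ldots,b_m$ (in some $\mathbb{R}^r$) with $E={\rm Gram}(a_1,\ldots,a_n,b_1,\ldots,b_m)$. (b) There exist $d\ge 1$ and $d\times d$ Hermitian matrices $A_1,\ldots,A_n,B_1,\ldots,B_m$ such that (i) $E={\rm Gram}(A_1,\ldots,A_n,B_1,\ldots,B_m)$ and (ii) $A_i^2=B_j^2=\frac1d I_d$ for all $i\in\{1,\ldots,n\}$, $j\in\{1,\ldots,m\}$. (c) There exist $d\ge1$ and $d\times d$ Hermitian matrices $X_1,\ldots,X_n,Y_1,\ldots,Y_m,K$ such that (i) $E={\rm Gram}(KX_1,\ldots,KX_n,Y_1K,\ldots,Y_mK)$; (ii) $X_i^2=Y_j^2=I_d$ for all $i\in\{1,\ldots,n\}$, $j\in\{1,\ldots,m\}$; (iii) $\mathrm{Tr}(K^2)=1$ and $K$ is positive definite.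
   Context: $\mathcal{E}_{N}$ denotes the elliptope: the set of real symmetric positive semidefinite $N\times N$ matrices with all diagonal entries equal to $1$. For real vectors, ${\rm Gram}(v_1,\ldots,v_N)$ is the matrix with entries $\langle v_i,v_j\rangle$; for $d\times d$ complex matrices $M_1,\ldots,M_N$, ${\rm Gram}(M_1,\ldots,M_N)$ is the $N\times N$ matrix with $(i,j)$ entry $\mathrm{Tr}(M_iM_j^* )$. *)

From HB Require Import structures.
From mathcomp Require Import all_boot all_order all_algebra.
From mathcomp Require Import complex.
From mathcomp Require Import reals.
Set Implicit Arguments. Unset Strict Implicit. Unset Printing Implicit Defensive.
Import Order.TTheory GRing.Theory Num.Theory.
Local Open Scope ring_scope.

Definition adjmx (C : numClosedFieldType) (p q : nat) (M : 'M[C]_(p, q)) : 'M[C]_(q, p) :=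
  (map_mx Num.conj M)^T.

Definition herm_mx (C : numClosedFieldType) (d : nat) (M : 'M[C]_d) : Prop :=
  adjmx M = M.

Definition posdef_mx (C : numClosedFieldType) (d : nat) (M : 'M[C]_d) : Prop :=
  herm_mx M /\ forall x : 'cV[C]_d, x != 0 -> 0 < (adjmx x *m M *m x) 0 0.

Definition psd_real (R : realFieldType) (N : nat) (E : 'M[R]_N) : Prop :=
  forall x : 'cV[R]_N, 0 <= (x^T *m E *m x) 0 0.

Definition elliptope (R : realFieldType) (N : nat) (E : 'M[R]_N) : Prop :=
  E^T = E /\ psd_real E /\ forall i, E i i = 1.

Definition gram_vec (R : realFieldType) (N r : nat) (v : 'I_N -> 'rV[R]_r) : 'M[R]_N :=
  \matrix_(i, j) (v i *m (v j)^T) 0 0.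

Definition gram_mx (C : numClosedFieldType) (N d : nat) (M : 'I_N -> 'M[C]_d) : 'M[C]_N :=
  \matrix_(i, j) \tr (M i *m adjmx (M j)).

Definition catfam (T : Type) (n m : nat) (f : 'I_n -> T) (g : 'I_m -> T) (k : 'I_(n + m)) : T :=
  match split k with inl i => f i | inr j => g j end.

Definition cmx (R : rcfType) (N : nat) (E : 'M[R]_N) : 'M[R[i]]_N :=
  map_mx (fun x => x%:C%C) E.

From HB Require Import structures.
From mathcomp Require Import all_boot all_order all_algebra.
From mathcomp Require Import complex.
From mathcomp Require Import reals.
From mathcomp Require Import ring lra.
Set Implicit Arguments. Unset Strict Implicit. Unset Printing Implicit Defensive.
Import Order.TTheory GRing.Theory Num.Theory.
Local Open Scope ring_scope.

(* A matrix of the elliptope is positive semidefinite, so it factors as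
   [V V^T] (by induction on Schur complements), and the rows of [V] are unit
   vectors with Gram matrix [E].  A real Clifford family, i.e. symmetric
   [g_1, ..., g_r] of size [2^r] with [g_p g_q + g_q g_p = 2 (p == q)],
   turns a vector [v] into [\sum_p v_p g_p], whose square is [|v|^2] and
   whose products have trace [2^r <v, w>]; rescaling by [2^(-r/2)] gives (b).
   Then [X = sqrt d A] and [K = I / sqrt d] give (c).  Conversely, a Gram
   matrix of matrices is positive semidefinite because
   [x^T Gram(M) x = Tr(N N^* )] for [N = \sum_k x_k M_k], and in (c) every
   diagonal entry is [Tr(K X X K) = Tr(Y K K Y) = Tr(K^2) = 1]. *)

Section ConjugateTranspose.
Variable C : numClosedFieldType.

Lemma adjmxD p q (A B : 'M[C]_(p, q)) : adjmx (A + B) = adjmx A + adjmx B.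
Proof. by apply/matrixP => i j; rewrite /adjmx !mxE rmorphD. Qed.

Lemma adjmx0 p q : adjmx (0 : 'M[C]_(p, q)) = 0.
Proof. by apply/matrixP => i j; rewrite /adjmx !mxE rmorph0. Qed.

Lemma adjmx_sum p q I (r : seq I) (P : pred I) (F : I -> 'M[C]_(p, q)) :
  adjmx (\sum_(i <- r | P i) F i) = \sum_(i <- r | P i) adjmx (F i).
Proof. exact: (big_morph _ (@adjmxD p q) (@adjmx0 p q)). Qed.

Lemma adjmxZ p q c (A : 'M[C]_(p, q)) : adjmx (c *: A) = c^* *: adjmx A.
Proof. by apply/matrixP => i j; rewrite /adjmx !mxE rmorphM. Qed.

Lemma adjmxM p q r (A : 'M[C]_(p, q)) (B : 'M[C]_(q, r)) :
  adjmx (A *m B) = adjmx B *m adjmx A.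
Proof. by rewrite /adjmx map_mxM trmx_mul. Qed.

Lemma adjmx_scalar d (c : C) : adjmx (c%:M : 'M_d) = c^*%:M.
Proof. by rewrite /adjmx map_scalar_mx tr_scalar_mx. Qed.

Lemma mxtrace_mul_adj_ge0 p q (M : 'M[C]_(p, q)) : 0 <= \tr (M *m adjmx M).
Proof.
apply: sumr_ge0 => i _; rewrite mxE; apply: sumr_ge0 => k _.
by rewrite /adjmx !mxE mul_conjC_ge0.
Qed.

Lemma adjmx_mul_gt0 d (x : 'cV[C]_d) : x != 0 -> 0 < (adjmx x *m x) 0 0.
Proof.
have term_ge0 k : 0 <= adjmx x 0 k * x k 0 by rewrite /adjmx !mxE mulrC mul_conjC_ge0.
move=> x_neq0; rewrite mxE lt_def sumr_ge0 // andbT; apply: contraNN x_neq0 => /eqP sum0.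
apply/eqP/matrixP => k j; rewrite ord1 mxE.
have /eqP := psumr_eq0P (fun k _ => term_ge0 k) sum0 (i := k) isT.
by rewrite /adjmx !mxE mulrC mul_conjC_eq0 => /eqP.
Qed.

Lemma posdef_scalar_mx d (c : C) : 0 < c -> posdef_mx (c%:M : 'M_d).
Proof.
move=> c_gt0; split; first by rewrite /herm_mx adjmx_scalar conj_Creal ?gtr0_real.
by move=> x x_neq0; rewrite mul_mx_scalar -scalemxAl mxE mulr_gt0 ?adjmx_mul_gt0.
Qed.

End ConjugateTranspose.

Fixpoint clifford_dim r :=
  if r is r'.+1 then (clifford_dim r' + clifford_dim r')%N else 1%N.

Lemma clifford_dim_gt0 r : (0 < clifford_dim r)%N.
Proof. by elim: r => //= r IH; rewrite addn_gt0 IH. Qed.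

Section CliffordRing.
Variable R : comPzRingType.

(* [clifford_mx f] is [\sum_p f p *: g_p] for the Clifford family [g_p] whose
   last member is [diag(1, -1)] and whose others are the previous family
   repeated off the diagonal. *)
Fixpoint clifford_mx r : ('I_r -> R) -> 'M[R]_(clifford_dim r) :=
  match r return ('I_r -> R) -> 'M[R]_(clifford_dim r) with
  | 0 => fun _ => 0
  | r'.+1 => fun f =>
     let g := clifford_mx (fun i : 'I_r' => f (widen_ord (leqnSn r') i)) in
     block_mx (f ord_max)%:M g g (- (f ord_max)%:M)
  end.

Lemma tr_clifford_mx r (f : 'I_r -> R) : (clifford_mx f)^T = clifford_mx f.
Proof.
elim: r f => [|r IH] f /=; first by rewrite trmx0.
by rewrite tr_block_mx !IH tr_scalar_mx raddfN /= tr_scalar_mx.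
Qed.

Lemma clifford_mx_anticomm r (f g : 'I_r -> R) :
  clifford_mx f *m clifford_mx g + clifford_mx g *m clifford_mx f =
  (2 * \sum_(i < r) f i * g i)%:M.
Proof.
elim: r f g => [|r IH] f g /=.
  by rewrite big_ord0 mulr0 mul0mx addr0 raddf0.
rewrite !mulmx_block add_block_mx scalar_mx_block big_ord_recr /= mulrDr raddfD /= -IH.
set F := clifford_mx _; set G := clifford_mx _.
rewrite !mul_mx_scalar !mulNmx !mulmxN !mul_scalar_mx !scale_scalar_mx opprK.
rewrite (mulrC (g _)) mulr_natl raddfMn /= mulr2n.
congr block_mx.
- by rewrite addrACA addrC.
- by rewrite [F *m _]scalar_mxC [G *m _]scalar_mxC !mul_scalar_mx addrA subrK subrr.
- by rewrite addrA subrK subrr.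
- by rewrite opprK addrACA.
Qed.

End CliffordRing.

Section CliffordField.
Variable R : numFieldType.

Lemma clifford_mx_sq r (f : 'I_r -> R) :
  clifford_mx f *m clifford_mx f = (\sum_(i < r) f i * f i)%:M.
Proof.
apply: (@scalerI _ _ 2); first by rewrite pnatr_eq0.
by rewrite scale_scalar_mx -clifford_mx_anticomm scaler_nat mulr2n.
Qed.

Lemma mxtrace_clifford_mul r (f g : 'I_r -> R) :
  \tr (clifford_mx f *m clifford_mx g) = (clifford_dim r)%:R * \sum_(i < r) f i * g i.
Proof.
apply/eqP; rewrite -(eqr_pMn2r (_ : 0 < 2)%N) // !mulr2n.
rewrite {2}mxtrace_mulC -raddfD /= clifford_mx_anticomm mxtrace_scalar -mulr_natr.
by apply/eqP; ring.
Qed.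

End CliffordField.

Section SymmetricFactorization.
Variable R : rcfType.

Lemma trmx_mulC N (x y : 'cV[R]_N) : (x^T *m y) 0 0 = (y^T *m x) 0 0.
Proof. by rewrite -[y^T *m x]trmxK trmx_mul !trmxK [in RHS]mxE. Qed.

Lemma trmx_mul_self_eq0 N (x : 'cV[R]_N) : ((x^T *m x) 0 0 == 0) = (x == 0).
Proof.
apply/idP/eqP => [|->]; last by rewrite mulmx0 mxE.
rewrite mxE psumr_eq0 => [/allP x0|k _]; last by rewrite !mxE -expr2 sqr_ge0.
apply/matrixP => k j; rewrite ord1 mxE.
by have := x0 k (mem_index_enum k); rewrite !mxE mulf_eq0 orbb => /eqP.
Qed.

Lemma quad_block_col N (e t : R) (c y : 'cV[R]_N) (d : 'M[R]_N) :
  ((col_mx t%:M y)^T *m block_mx e%:M c^T c d *m col_mx t%:M y) 0 0 =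
  t ^+ 2 * e + 2 * t * (c^T *m y) 0 0 + (y^T *m d *m y) 0 0.
Proof.
have -> : 2 * t * (c^T *m y) 0 0 = t * (c^T *m y) 0 0 + t * (y^T *m c) 0 0.
  by rewrite [(y^T *m c) 0 0]trmx_mulC; ring.
rewrite tr_col_mx mul_row_block mul_row_col tr_scalar_mx !mulmxDl !mul_scalar_mx.
by rewrite -!scalemxAl !mul_mx_scalar !mxE eqxx mulr1n; ring.
Qed.

Section PsdBlock.
Variables (N : nat) (e : R) (c : 'cV[R]_N) (d : 'M[R]_N).
Hypothesis psd_block : psd_real (block_mx e%:M c^T c d : 'M_(1 + N)).

Lemma psd_block_quad t (y : 'cV_N) :
  0 <= t ^+ 2 * e + 2 * t * (c^T *m y) 0 0 + (y^T *m d *m y) 0 0.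
Proof. by rewrite -quad_block_col; apply: psd_block. Qed.

Lemma psd_block_corner_ge0 : 0 <= e.
Proof. by have := psd_block_quad 1 0; rewrite !mulmx0 !mxE expr1n mul1r mulr0 !addr0. Qed.

Lemma psd_block_corner_eq0 : e = 0 -> c = 0.
Proof.
move=> e0; apply/eqP; rewrite -trmx_mul_self_eq0; apply/negPn/negP => s_neq0.
set s := (c^T *m c) 0 0 in s_neq0; set q := (c^T *m d *m c) 0 0.
have := psd_block_quad (- (q + 1) / (2 * s)) c; rewrite e0 -/s -/q.
suff -> : 2 * (- (q + 1) / (2 * s)) * s = - (q + 1) by lra.
by field; rewrite s_neq0.
Qed.

Lemma psd_schur_complement : psd_real (d - e^-1 *: (c *m c^T)).
Proof.
move=> y.
have -> : (y^T *m (d - e^-1 *: (c *m c^T)) *m y) 0 0 =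
          (y^T *m d *m y) 0 0 - e^-1 * (c^T *m y) 0 0 ^+ 2.
  rewrite mulmxBr mulmxBl -scalemxAr -scalemxAl !mulmxA -(mulmxA _ c^T).
  rewrite [LHS]mxE; congr (_ + _).
  rewrite [y^T *m c]mx11_scalar [c^T *m y]mx11_scalar [(y^T *m c) 0 0]trmx_mulC.
  rewrite mul_scalar_mx !scale_scalar_mx.
  by rewrite !mxE eqxx mulr1n expr2.
have completed_square u q :
    0 <= (- u / e) ^+ 2 * e + 2 * (- u / e) * u + q -> 0 <= q - e^-1 * u ^+ 2.
  have [->|e_neq0] := eqVneq e 0; first by rewrite invr0; lra.
  suff -> : (- u / e) ^+ 2 * e + 2 * (- u / e) * u + q = q - e^-1 * u ^+ 2 by [].
  by field.
exact/completed_square/psd_block_quad.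
Qed.

End PsdBlock.

Lemma schur_block_factor N (e : R) (c : 'cV[R]_N) (d W : 'M[R]_N) :
  0 <= e -> (e = 0 -> c = 0) -> d - e^-1 *: (c *m c^T) = W *m W^T ->
  let V := block_mx (Num.sqrt e)%:M 0 ((Num.sqrt e)^-1 *: c) W in
  block_mx e%:M c^T c d = V *m V^T.
Proof.
move=> e_ge0 c0 schurW V; set s := Num.sqrt e.
have s_c : s *: (s^-1 *: c) = c.
  have [/c0->|e_neq0] := eqVneq e 0; first by rewrite !scaler0.
  by rewrite scalerA divff ?scale1r // sqrtr_eq0 -ltNge lt_def e_neq0.
have scaled_cc : s^-1 *: c *m (s^-1 *: c)^T = e^-1 *: (c *m c^T).
  by rewrite linearZ /= -scalemxAl -scalemxAr scalerA -expr2 exprVn sqr_sqrtr.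
rewrite /V tr_block_mx mulmx_block !trmx0 !mulmx0 !addr0 mul0mx addr0.
rewrite tr_scalar_mx -scalar_mxM -expr2 sqr_sqrtr // -schurW scaled_cc addrC subrK.
congr block_mx; last by rewrite mul_mx_scalar s_c.
by rewrite -[_%:M]tr_scalar_mx -trmx_mul mul_mx_scalar s_c.
Qed.

Lemma psd_real_factor N (E : 'M[R]_N) :
  E^T = E -> psd_real E -> exists V : 'M[R]_N, E = V *m V^T.
Proof.
elim: N E => [|N IH] E symE psdE; first by exists 0; apply/matrixP => [[]].
pose e := ulsubmx (E : 'M_(1 + N)) 0 0.
pose c := dlsubmx (E : 'M_(1 + N)); pose d := drsubmx (E : 'M_(1 + N)).
have blockE : E = block_mx e%:M c^T c d :> 'M_(1 + N).
  by rewrite -mx11_scalar /c trmx_dlsub symE submxK.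
have symd : d^T = d by rewrite /d trmx_drsub symE.
rewrite blockE in psdE.
have symS : (d - e^-1 *: (c *m c^T))^T = d - e^-1 *: (c *m c^T).
  by rewrite raddfB /= symd linearZ /= trmx_mul trmxK.
have [W schurW] := IH _ symS (psd_schur_complement psdE).
exists (block_mx (Num.sqrt e)%:M 0 ((Num.sqrt e)^-1 *: c) W); rewrite blockE.
exact: schur_block_factor (psd_block_corner_ge0 psdE) (psd_block_corner_eq0 psdE) schurW.
Qed.

End SymmetricFactorization.

Section RealInComplex.
Variable R : rcfType.

Lemma conjC_real_complex (x : R) : (x%:C%C)^* = x%:C%C.
Proof. exact: conjc_real. Qed.

Lemma adjmx_map_real p q (A : 'M[R]_(p, q)) :
  adjmx (map_mx (real_complex R) A) = map_mx (real_complex R) A^T.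
Proof. by apply/matrixP => i j; rewrite /adjmx !mxE conjC_real_complex. Qed.

Lemma herm_map_real d (A : 'M[R]_d) : A^T = A -> herm_mx (map_mx (real_complex R) A).
Proof. by move=> symA; rewrite /herm_mx adjmx_map_real symA. Qed.

Lemma gram_mx_psd N d (M : 'I_N -> 'M[R[i]]_d) (E : 'M[R]_N) :
  cmx E = gram_mx M -> psd_real E.
Proof.
move=> EM x; rewrite -ler0c.
have E_tr k l : (E k l)%:C%C = \tr (M k *m adjmx (M l)).
  by move/matrixP: EM => /(_ k l); rewrite !mxE.
pose Mx := \sum_k (x k 0)%:C%C *: M k.
suff -> : ((x^T *m E *m x) 0 0)%:C%C = \tr (Mx *m adjmx Mx) by apply: mxtrace_mul_adj_ge0.
rewrite adjmx_sum mulmx_sumr raddf_sum mxE rmorph_sum /=.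
apply: eq_bigr => l _; rewrite mulmx_suml raddf_sum mxE rmorphM rmorph_sum big_distrl /=.
apply: eq_bigr => k _.
rewrite !mxE rmorphM /= E_tr adjmxZ conjC_real_complex -scalemxAl -scalemxAr !mxtraceZ.
by rewrite -mulrA (mulrC (\tr _)).
Qed.

Definition clifford_herm r (v : 'rV[R]_r) : 'M[R[i]]_(clifford_dim r) :=
  map_mx (real_complex R) ((Num.sqrt (clifford_dim r)%:R)^-1 *: clifford_mx (v 0)).

Lemma herm_clifford_herm r (v : 'rV[R]_r) : herm_mx (clifford_herm v).
Proof. by apply: herm_map_real; rewrite linearZ /= tr_clifford_mx. Qed.

Lemma clifford_herm_mul r (v w : 'rV[R]_r) :
  clifford_herm v *m clifford_herm w =
  map_mx (real_complex R)
    ((clifford_dim r)%:R^-1 *: (clifford_mx (v 0) *m clifford_mx (w 0))).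
Proof.
by rewrite -map_mxM -scalemxAl -scalemxAr scalerA -expr2 exprVn sqr_sqrtr ?ler0n.
Qed.

Lemma mxtrace_clifford_herm r (v w : 'rV[R]_r) :
  \tr (clifford_herm v *m adjmx (clifford_herm w)) = ((v *m w^T) 0 0)%:C%C.
Proof.
rewrite herm_clifford_herm clifford_herm_mul trace_map_mx mxtraceZ mxtrace_clifford_mul.
rewrite mulKf ?pnatr_eq0 -?lt0n ?clifford_dim_gt0 // [in RHS]mxE.
by congr (_%:C%C); apply: eq_bigr => p _; rewrite mxE.
Qed.

Lemma clifford_herm_sq r (v : 'rV[R]_r) : (v *m v^T) 0 0 = 1 ->
  clifford_herm v *m clifford_herm v = ((clifford_dim r)%:R^-1)%:M.
Proof.
move=> v_unit; rewrite clifford_herm_mul clifford_mx_sq scale_scalar_mx map_scalar_mx /=.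
have -> : \sum_(p < r) v 0 p * v 0 p = 1.
  by rewrite -v_unit mxE; apply: eq_bigr => p _; rewrite mxE.
by rewrite mulr1 fmorphV rmorph_nat.
Qed.

Lemma gram_clifford_herm N r (v : 'I_N -> 'rV[R]_r) :
  gram_mx (fun k => clifford_herm (v k)) = cmx (gram_vec v).
Proof.
by apply/matrixP => k l; rewrite [gram_mx _ k l]mxE mxtrace_clifford_herm !mxE.
Qed.

End RealInComplex.

Lemma gram_vec_row (R : realFieldType) N r (V : 'M[R]_(N, r)) :
  gram_vec (fun k => row k V) = V *m V^T.
Proof. by apply/matrixP => k l; rewrite !mxE; apply: eq_bigr => p _; rewrite !mxE. Qed.

Lemma eq_gram_mx (C : numClosedFieldType) N d (M M' : 'I_N -> 'M[C]_d) :
  M =1 M' -> gram_mx M = gram_mx M'.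
Proof. by move=> eqM; apply/matrixP => k l; rewrite !mxE !eqM. Qed.

Section Concatenation.
Variables (T U : Type) (n m : nat).

Lemma catfam_comp (h : T -> U) (f : 'I_n -> T) (g : 'I_m -> T) :
  catfam (h \o f) (h \o g) =1 h \o catfam f g.
Proof. by move=> k; rewrite /catfam /=; case: split. Qed.

Lemma eq_catfam (f f' : 'I_n -> T) (g g' : 'I_m -> T) :
  f =1 f' -> g =1 g' -> catfam f g =1 catfam f' g'.
Proof.
by move=> eqf eqg k; rewrite /catfam; case: split => [i|j]; [apply: eqf | apply: eqg].
Qed.

Lemma catfam_split (F : 'I_(n + m) -> T) :
  catfam (fun i => F (lshift m i)) (fun j => F (rshift n j)) =1 F.
Proof. by move=> k; rewrite /catfam; case: splitP => i ik; congr F; apply: val_inj. Qed.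

End Concatenation.

Section Representations.
Variables (R : rcfType) (n m : nat) (E : 'M[R]_(n + m)).

Definition gram_of_unit_vectors :=
  exists (r : nat) (a : 'I_n -> 'rV[R]_r) (b : 'I_m -> 'rV[R]_r),
    (forall i, (a i *m (a i)^T) 0 0 = 1) /\
    (forall j, (b j *m (b j)^T) 0 0 = 1) /\
    E = gram_vec (catfam a b).

Definition gram_of_scaled_involutions :=
  exists (d : nat) (A : 'I_n -> 'M[R[i]]_d) (B : 'I_m -> 'M[R[i]]_d),
    (0 < d)%N /\
    (forall i, herm_mx (A i)) /\ (forall j, herm_mx (B j)) /\
    cmx E = gram_mx (catfam A B) /\
    (forall i, A i *m A i = (d%:R^-1)%:M) /\
    (forall j, B j *m B j = (d%:R^-1)%:M).

Definition gram_of_twisted_involutions :=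
  exists (d : nat) (X : 'I_n -> 'M[R[i]]_d) (Y : 'I_m -> 'M[R[i]]_d)
         (K : 'M[R[i]]_d),
    (0 < d)%N /\
    (forall i, herm_mx (X i)) /\ (forall j, herm_mx (Y j)) /\
    herm_mx K /\
    cmx E = gram_mx (catfam (fun i => K *m X i) (fun j => Y j *m K)) /\
    (forall i, X i *m X i = 1%:M) /\ (forall j, Y j *m Y j = 1%:M) /\
    \tr (K *m K) = 1 /\ posdef_mx K.

Lemma elliptope_gram_of_unit_vectors : elliptope E -> gram_of_unit_vectors.
Proof.
move=> [symE [psdE diagE]]; have [V EV] := psd_real_factor symE psdE.
have row_unit k : (row k V *m (row k V)^T) 0 0 = 1.
  by rewrite -(diagE k) EV -[V *m V^T]gram_vec_row [RHS]mxE.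
exists (n + m)%N, (fun i => row (lshift m i) V), (fun j => row (rshift n j) V).
split; first by move=> i; apply: row_unit.
split; first by move=> j; apply: row_unit.
rewrite EV -gram_vec_row; apply/matrixP => k l.
by rewrite !mxE !(catfam_split (fun k => row k V)).
Qed.

Lemma gram_of_unit_vectors_scaled_involutions :
  gram_of_unit_vectors -> gram_of_scaled_involutions.
Proof.
move=> [r [a [b [a_unit [b_unit Eab]]]]].
exists (clifford_dim r), (fun i => clifford_herm (a i)), (fun j => clifford_herm (b j)).
split; first exact: clifford_dim_gt0.
split; first by move=> i; apply: herm_clifford_herm.
split; first by move=> j; apply: herm_clifford_herm.
split.
  by rewrite Eab -gram_clifford_herm; apply: eq_gram_mx => k; rewrite catfam_comp.
by split => [i|j]; apply: clifford_herm_sq.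
Qed.

Lemma gram_of_scaled_twisted_involutions :
  gram_of_scaled_involutions -> gram_of_twisted_involutions.
Proof.
move=> [d [A [B [d_gt0 [hermA [hermB [EAB [A_sq B_sq]]]]]]]].
have d_neq0 : d%:R != 0 :> R[i] by rewrite pnatr_eq0 -lt0n.
pose s : R[i] := sqrtC d%:R.
have s_gt0 : 0 < s by rewrite sqrtC_gt0 ltr0n.
have s_neq0 : s != 0 by rewrite gt_eqF.
have s_conj : s^* = s by rewrite conj_Creal ?gtr0_real.
have scaled_sq (Z : 'M_d) : Z *m Z = (d%:R^-1)%:M -> (s *: Z) *m (s *: Z) = 1%:M.
  move=> Z_sq; rewrite -scalemxAl -scalemxAr scalerA -expr2 sqrtCK Z_sq.
  by rewrite scale_scalar_mx divff.
have scaled_herm (Z : 'M_d) : herm_mx Z -> herm_mx (s *: Z).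
  by rewrite /herm_mx adjmxZ s_conj => ->.
have K_posdef : posdef_mx ((s^-1)%:M : 'M_d) by apply: posdef_scalar_mx; rewrite invr_gt0.
exists d, (fun i => s *: A i), (fun j => s *: B j), (s^-1)%:M.
split; first exact: d_gt0.
split; first by move=> i; apply: scaled_herm.
split; first by move=> j; apply: scaled_herm.
split; first exact: K_posdef.1.
split.
  rewrite EAB; apply: eq_gram_mx; apply: eq_catfam => k /=.
    by rewrite mul_scalar_mx scalerA mulVf ?scale1r.
  by rewrite mul_mx_scalar scalerA mulVf ?scale1r.
split; first by move=> i; apply: scaled_sq.
split; first by move=> j; apply: scaled_sq.
split; first by rewrite -scalar_mxM mxtrace_scalar -mulr_natr -invfM -expr2 sqrtCK mulVf.
exact: K_posdef.
Qed.

Lemma gram_of_twisted_involutions_elliptope :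
  E^T = E -> gram_of_twisted_involutions -> elliptope E.
Proof.
move=> symE [d [X [Y [K [_ [hermX [hermY [hermK [EXY [X_sq [Y_sq [trK _]]]]]]]]]]]].
split; first exact: symE.
split; first exact: gram_mx_psd EXY.
move=> k; apply: complexI; move/matrixP: EXY => /(_ k k); rewrite !mxE => ->.
rewrite /catfam rmorph1 -trK; case: split => [i|j]; rewrite adjmxM ?hermX ?hermY hermK.
  by rewrite mulmxA -(mulmxA K) X_sq mulmx1.
by rewrite mxtrace_mulC mulmxA -(mulmxA K) Y_sq mulmx1.
Qed.

End Representations.

Theorem lemma2p6 (R : realType) (n m : nat) (E : 'M[R]_(n + m)) (hE : E^T = E) :
  [<-> (* (a) *) elliptope E;
       (* (a), Gram form *)
       exists (r : nat) (a : 'I_n -> 'rV[R]_r) (b : 'I_m -> 'rV[R]_r),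
         (forall i, (a i *m (a i)^T) 0 0 = 1) /\
         (forall j, (b j *m (b j)^T) 0 0 = 1) /\
         E = gram_vec (catfam a b);
       (* (b) *)
       exists (d : nat) (A : 'I_n -> 'M[R[i]]_d) (B : 'I_m -> 'M[R[i]]_d),
         (0 < d)%N /\
         (forall i, herm_mx (A i)) /\ (forall j, herm_mx (B j)) /\
         cmx E = gram_mx (catfam A B) /\
         (forall i, A i *m A i = (d%:R^-1)%:M) /\
         (forall j, B j *m B j = (d%:R^-1)%:M);
       (* (c) *)
       exists (d : nat) (X : 'I_n -> 'M[R[i]]_d) (Y : 'I_m -> 'M[R[i]]_d)
              (K : 'M[R[i]]_d),
         (0 < d)%N /\
         (forall i, herm_mx (X i)) /\ (forall j, herm_mx (Y j)) /\
         herm_mx K /\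
         cmx E = gram_mx (catfam (fun i => K *m X i) (fun j => Y j *m K)) /\
         (forall i, X i *m X i = 1%:M) /\ (forall j, Y j *m Y j = 1%:M) /\
         \tr (K *m K) = 1 /\ posdef_mx K].
Proof.
tfae.
- exact: elliptope_gram_of_unit_vectors.
- exact: gram_of_unit_vectors_scaled_involutions.
- exact: gram_of_scaled_twisted_involutions.
- exact: gram_of_twisted_involutions_elliptope.
Qed.
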